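(* Let $h>0$, assume $g$ satisfies (H), fix $c>0$, and let $\phi,\psi$ be two wavefront profiles of (1) with the same velocity $c$. If there is a finite $T$ such that $\phi(t)<\psi(t)$ for all $t<T$, then $\phi(t)<\psi(t)$ for all $t\in\mathbb{R}$.
   Context: Hypothesis (H): $g:\mathbb{R}_+\to\mathbb{R}_+$ is continuous and strictly increasing; $g(x)=x$ has exactly two nonnegative solutions $0$ and $\kappa>0$; $g$ is differentiable at $0,\kappa$ with $g'(0)>1$, $g'(\kappa)<1$; $g$ is $C^1$ near $\kappa$; and $|g(u)/u-g'(0)|\le Cu^\theta$ for $u\in(0,\delta]$ for some $C>0,\theta\in(0,1],\delta>0$. A wavefront profile with velocity $c$ is a $C^2$, positive, bounded, monotone function $\phi:\mathbb{R}\to\mathbb{R}$ with $\phi(-\infty)=0$, $\phi(+\infty)=\kappa$ and $\phi''(s)-c\phi'(s)-\phi(s)+g(\phi(s-ch))=0$ for all $s\in\mathbb{R}$ (so that $\phi(\nu\cdot x+ct)$ solves $u_t=\Delta u-u+g(u(t-h,x))$). *)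

From Stdlib Require Import Reals Lra.
Open Scope R_scope.

(* Right derivative of g at x equals l (g only defined on R_+, so the
   derivative at 0 is one-sided). *)
Definition right_derivable_lim (g : R -> R) (x l : R) : Prop :=
  forall eps : R, 0 < eps -> exists del : R, 0 < del /\
    forall u : R, 0 < u < del -> Rabs ((g (x + u) - g x) / u - l) < eps.

(* Hypothesis (H) on g : R_+ -> R_+ (values of g on negative reals are
   irrelevant), with kappa > 0 the positive fixed point. *)
Definition hyp_H (g : R -> R) (kappa : R) : Prop :=
  (forall x, 0 <= x -> 0 <= g x) /\
  (forall x, 0 <= x -> forall eps, 0 < eps -> exists del, 0 < del /\
      forall y, 0 <= y -> Rabs (y - x) < del -> Rabs (g y - g x) < eps) /\
  (forall x y, 0 <= x -> x < y -> g x < g y) /\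
  0 < kappa /\
  (forall x, 0 <= x -> (g x = x <-> (x = 0 \/ x = kappa))) /\
  (exists g0 : R, right_derivable_lim g 0 g0 /\ 1 < g0 /\
     exists C theta delta : R, 0 < C /\ 0 < theta <= 1 /\ 0 < delta /\
       forall u, 0 < u <= delta -> Rabs (g u / u - g0) <= C * Rpower u theta) /\
  (exists gk : R, derivable_pt_lim g kappa gk /\ gk < 1) /\
  (exists (dk : R) (g' : R -> R), 0 < dk /\
     (forall x, kappa - dk < x < kappa + dk -> derivable_pt_lim g x (g' x)) /\
     (forall x, kappa - dk < x < kappa + dk -> continuity_pt g' x)).

(* phi is a wavefront profile with velocity c for the delayed equation
   u_t = Delta u - u + g(u(t-h,x)). *)
Definition wavefront (g : R -> R) (kappa h c : R) (phi : R -> R) : Prop :=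
  (exists phi1 phi2 : R -> R,
     (forall s, derivable_pt_lim phi s (phi1 s)) /\
     (forall s, derivable_pt_lim phi1 s (phi2 s)) /\
     (forall s, continuity_pt phi2 s) /\
     (forall s, phi2 s - c * phi1 s - phi s + g (phi (s - c * h)) = 0)) /\
  (forall s, 0 < phi s) /\
  (exists M, forall s, Rabs (phi s) <= M) /\
  ((forall s t, s <= t -> phi s <= phi t) \/
   (forall s t, s <= t -> phi t <= phi s)) /\
  (forall eps, 0 < eps -> exists N, forall s, s <= N -> Rabs (phi s) < eps) /\
  (forall eps, 0 < eps -> exists N, forall s, N <= s -> Rabs (phi s - kappa) < eps).

From Stdlib Require Import Reals Lra Classical.
Open Scope R_scope.

(* Write w_a(t) = psi(t + a) - phi(t).  Both profiles are nondecreasing and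
   bounded by kappa, and near kappa the map g contracts differences because
   g'(kappa) < 1.  At a global minimum m of w_a the profile equation gives
   g(psi(m - ch + a)) - g(phi(m - ch)) <= w_a(m); combined with monotonicity of g
   and the contraction near kappa this yields a comparison principle: w_a >= 0 as
   soon as w_a >= 0 left of a point beyond which psi(. + a) is close to kappa.
   Moreover a zero of w_a >= 0 propagates backwards by steps ch, which is
   impossible since phi < psi near -oo, so w_a >= 0 forces w_a > 0.
   The set of shifts a with w_a >= 0 is nonempty, upward closed and closed; by
   compactness of a window [T, S] a positive admissible shift can be decreased,
   so 0 is admissible, and then phi < psi everywhere. *)

Definition lim_left (f : R -> R) (l : R) : Prop :=
  forall eps, 0 < eps -> exists N, forall s, s <= N -> Rabs (f s - l) < eps.

Definition lim_right (f : R -> R) (l : R) : Prop :=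
  forall eps, 0 < eps -> exists N, forall s, N <= s -> Rabs (f s - l) < eps.

Definition vanishes_at_infinity (w : R -> R) : Prop :=
  forall eps, 0 < eps -> exists N, forall s, s <= - N \/ N <= s -> Rabs (w s) < eps.

Lemma lim_left_shift (f : R -> R) (l a : R) :
  lim_left f l -> lim_left (fun t => f (t + a)) l.
Proof.
  intros L e He; destruct (L e He) as [N HN].
  exists (N - a); intros s Hs; apply HN; lra.
Qed.

Lemma lim_right_shift (f : R -> R) (l a : R) :
  lim_right f l -> lim_right (fun t => f (t + a)) l.
Proof.
  intros L e He; destruct (L e He) as [N HN].
  exists (N - a); intros s Hs; apply HN; lra.
Qed.

Lemma Rabs_sub_half (x y l e : R) :
  Rabs (x - l) < e / 2 -> Rabs (y - l) < e / 2 -> Rabs (y - x) < e.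
Proof.
  intros Hx Hy; apply Rabs_def2 in Hx; apply Rabs_def2 in Hy; apply Rabs_def1; lra.
Qed.

Lemma difference_vanishes_at_infinity (p q : R -> R) (l r : R) :
  lim_left p l -> lim_left q l -> lim_right p r -> lim_right q r ->
  vanishes_at_infinity (fun s => q s - p s).
Proof.
  intros Lp Lq Rp Rq e He.
  destruct (Lp (e / 2) ltac:(lra)) as [N1 H1]; destruct (Lq (e / 2) ltac:(lra)) as [N2 H2].
  destruct (Rp (e / 2) ltac:(lra)) as [N3 H3]; destruct (Rq (e / 2) ltac:(lra)) as [N4 H4].
  exists (Rmax (Rmax (- N1) (- N2)) (Rmax N3 N4)); intros s [Hs|Hs];
    generalize (Rmax_l (- N1) (- N2)) (Rmax_r (- N1) (- N2)) (Rmax_l N3 N4) (Rmax_r N3 N4)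
      (Rmax_l (Rmax (- N1) (- N2)) (Rmax N3 N4)) (Rmax_r (Rmax (- N1) (- N2)) (Rmax N3 N4));
    intros.
  - apply (Rabs_sub_half _ _ l); [apply H1 | apply H2]; lra.
  - apply (Rabs_sub_half _ _ r); [apply H3 | apply H4]; lra.
Qed.

Lemma continuity_pt_eps (f : R -> R) (x : R) : continuity_pt f x ->
  forall e, 0 < e -> exists a, 0 < a /\ forall y, Rabs (y - x) < a -> Rabs (f y - f x) < e.
Proof.
  intros Cf e He; destruct (Cf e He) as [a [Ha Hy]]; exists a; split; [exact Ha|].
  intros y Hyx; destruct (Req_dec x y) as [<-|Hne].
  - unfold Rminus; rewrite Rplus_opp_r, Rabs_R0; exact He.
  - apply (Hy y); repeat split; assumption.
Qed.

Lemma continuity_pt_shift (f : R -> R) (a x : R) :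
  continuity_pt f (x + a) -> continuity_pt (fun t => f (t + a)) x.
Proof.
  intros Cf; apply (continuity_pt_comp (fun t => t + a) f); [|exact Cf].
  apply derivable_continuous_pt, derivable_pt_plus; [apply derivable_pt_id | apply derivable_pt_const].
Qed.

(* A continuous function vanishing at infinity and taking a negative value attains
   its global minimum (on a large compact interval, outside of which it is larger). *)
Lemma global_min_exists (w : R -> R) (t0 : R) :
  (forall x, continuity_pt w x) -> vanishes_at_infinity w -> w t0 < 0 ->
  exists m, forall x, w m <= w x.
Proof.
  intros Cw Vw Ht0.
  destruct (Vw (- w t0) ltac:(lra)) as [N HN].
  set (A := Rmax (Rabs N) (Rabs t0)).
  assert (HA : Rabs N <= A /\ Rabs t0 <= A) by (split; [apply Rmax_l | apply Rmax_r]).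
  assert (Ht0A : - A <= t0 <= A) by (generalize (Rle_abs t0) (Rle_abs (- t0)); rewrite Rabs_Ropp; lra).
  destruct (continuity_ab_min w (- A) A ltac:(lra) (fun x _ => Cw x)) as [m [Hmin _]].
  exists m; intros x.
  destruct (Rle_lt_dec (- A) x) as [Hl|Hl]; [destruct (Rle_lt_dec x A) as [Hr|Hr]|].
  - apply Hmin; lra.
  - specialize (Hmin t0 Ht0A).
    assert (Hx : Rabs (w x) < - w t0) by (apply HN; right; destruct HA as [HA _];
      generalize (Rle_abs N); lra).
    apply Rabs_def2 in Hx; lra.
  - specialize (Hmin t0 Ht0A).
    assert (Hx : Rabs (w x) < - w t0) by (apply HN; left; destruct HA as [HA _];
      generalize (Rle_abs N); lra).
    apply Rabs_def2 in Hx; lra.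
Qed.

Lemma derivatives_at_global_min (f f1 f2 : R -> R) (m : R) :
  (forall x, derivable_pt_lim f x (f1 x)) -> derivable_pt_lim f1 m (f2 m) ->
  (forall x, f m <= f x) -> f1 m = 0 /\ 0 <= f2 m.
Proof.
  intros Df Df1 Hmin.
  assert (H0 : f1 m = 0).
  { exact (deriv_minimum f (m - 1) (m + 1) m (exist _ (f1 m) (Df m))
      ltac:(lra) ltac:(lra) (fun x _ _ => Hmin x)). }
  split; [exact H0|].
  destruct (Rle_lt_dec 0 (f2 m)) as [Hle|Hlt]; [exact Hle|exfalso].
  (* f2 m < 0 makes f1 positive just left of m, so f would increase towards m *)
  destruct (Df1 (- f2 m / 2) ltac:(lra)) as [[d Hd] Hdel]; simpl in Hdel.
  assert (Hpos : forall k, - d < k < 0 -> 0 < f1 (m + k)).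
  { intros k Hk.
    assert (Hq : Rabs ((f1 (m + k) - f1 m) / k - f2 m) < - f2 m / 2)
      by (apply Hdel; [lra | rewrite Rabs_left; lra]).
    rewrite H0, Rminus_0_r in Hq; apply Rabs_def2 in Hq.
    replace (f1 (m + k)) with ((f1 (m + k) / k) * k) by (field; lra); nra. }
  destruct (MVT_cor2 f f1 (m - d / 2) m ltac:(lra) (fun x _ => Df x)) as [xi [Hxi Hr]].
  assert (P := Hpos (xi - m) ltac:(lra)); replace (m + (xi - m)) with xi in P by ring.
  specialize (Hmin (m - d / 2)); nra.
Qed.

Definition profile_solution (g : R -> R) (c h : R) (p : R -> R) : Prop :=
  exists p1 p2 : R -> R,
    (forall s, derivable_pt_lim p s (p1 s)) /\
    (forall s, derivable_pt_lim p1 s (p2 s)) /\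
    (forall s, p2 s - c * p1 s - p s + g (p (s - c * h)) = 0).

Lemma derivable_pt_lim_shift (f f' : R -> R) (a x : R) :
  derivable_pt_lim f (x + a) (f' (x + a)) ->
  derivable_pt_lim (fun t => f (t + a)) x (f' (x + a)).
Proof.
  intros D e He; destruct (D e He) as [d Hd]; exists d; intros k Hk Hka.
  replace (x + k + a) with (x + a + k) by ring; apply Hd; assumption.
Qed.

Lemma profile_solution_shift (g : R -> R) (c h a : R) (q : R -> R) :
  profile_solution g c h q -> profile_solution g c h (fun t => q (t + a)).
Proof.
  intros [q1 [q2 [Dq [Dq1 Eq]]]].
  exists (fun t => q1 (t + a)), (fun t => q2 (t + a)); repeat split.
  - intros s; apply derivable_pt_lim_shift, Dq.
  - intros s; apply derivable_pt_lim_shift, Dq1.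
  - intros s; replace (s - c * h + a) with (s + a - c * h) by ring; apply Eq.
Qed.

Lemma profile_solution_continuous (g : R -> R) (c h : R) (p : R -> R) :
  profile_solution g c h p -> forall x, continuity_pt p x.
Proof.
  intros [p1 [_ [Dp _]]] x; apply derivable_continuous_pt; exact (exist _ (p1 x) (Dp x)).
Qed.

(* At a global minimum m of the gap q - p the second-order terms of the profile
   equation have the right sign, so the delayed nonlinear gap is at most the gap at m. *)
Lemma delayed_gap_at_min (g : R -> R) (c h m : R) (p q : R -> R) :
  profile_solution g c h p -> profile_solution g c h q ->
  (forall x, q m - p m <= q x - p x) ->
  g (q (m - c * h)) - g (p (m - c * h)) <= q m - p m.
Proof.
  intros [p1 [p2 [Dp [Dp1 Ep]]]] [q1 [q2 [Dq [Dq1 Eq]]]] Hm.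
  destruct (derivatives_at_global_min (fun x => q x - p x) (fun x => q1 x - p1 x)
    (fun x => q2 x - p2 x) m) as [H1 H2].
  - intros x; exact (derivable_pt_lim_minus q p x _ _ (Dq x) (Dp x)).
  - exact (derivable_pt_lim_minus q1 p1 m _ _ (Dq1 m) (Dp1 m)).
  - exact Hm.
  - specialize (Ep m); specialize (Eq m); nra.
Qed.

Lemma wavefront_profile_solution (g : R -> R) (kappa h c : R) (phi : R -> R) :
  wavefront g kappa h c phi -> profile_solution g c h phi.
Proof. intros [[p1 [p2 [Dp [Dp1 [_ Ep]]]]] _]; exists p1, p2; auto. Qed.

Lemma wavefront_limits (g : R -> R) (kappa h c : R) (phi : R -> R) :
  wavefront g kappa h c phi -> lim_left phi 0 /\ lim_right phi kappa.
Proof.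
  intros [_ [_ [_ [_ [L0 LK]]]]]; split; [|exact LK].
  intros e He; destruct (L0 e He) as [N HN]; exists N; intros s Hs.
  rewrite Rminus_0_r; auto.
Qed.

Lemma wavefront_nondecreasing (g : R -> R) (kappa h c : R) (phi : R -> R) :
  0 < kappa -> wavefront g kappa h c phi ->
  (forall s t, s <= t -> phi s <= phi t) /\ (forall s, phi s <= kappa).
Proof.
  intros Hk W; destruct (wavefront_limits g kappa h c phi W) as [L0 LK].
  destruct W as [_ [_ [_ [[Hm|Hm] _]]]].
  - split; [exact Hm|]; intros s.
    destruct (Rle_lt_dec (phi s) kappa) as [H|H]; [exact H|exfalso].
    destruct (LK (phi s - kappa) ltac:(lra)) as [N HN].
    specialize (HN (Rmax N s) (Rmax_l _ _)); specialize (Hm s (Rmax N s) (Rmax_r _ _)).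
    apply Rabs_def2 in HN; lra.
  - exfalso.
    destruct (L0 (kappa / 2) ltac:(lra)) as [N1 H1]; destruct (LK (kappa / 2) ltac:(lra)) as [N2 H2].
    specialize (H1 (Rmin N1 N2) (Rmin_l _ _)); specialize (H2 (Rmax N1 N2) (Rmax_r _ _)).
    specialize (Hm (Rmin N1 N2) (Rmax N1 N2)
      ltac:(generalize (Rmin_l N1 N2) (Rmax_l N1 N2); lra)).
    apply Rabs_def2 in H1; apply Rabs_def2 in H2; lra.
Qed.

Lemma contraction_near_kappa (g : R -> R) (kappa : R) :
  (exists gk : R, derivable_pt_lim g kappa gk /\ gk < 1) ->
  (exists (dk : R) (g' : R -> R), 0 < dk /\
     (forall x, kappa - dk < x < kappa + dk -> derivable_pt_lim g x (g' x)) /\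
     (forall x, kappa - dk < x < kappa + dk -> continuity_pt g' x)) ->
  exists d, 0 < d /\ forall u v, kappa - d <= u -> u < v -> v <= kappa -> g v - g u < v - u.
Proof.
  intros [gk [Dk Hgk]] [dk [g' [Hdk [Dg Cg]]]].
  assert (E : g' kappa = gk) by (apply (uniqueness_limite g kappa); [apply Dg; lra | exact Dk]).
  destruct (continuity_pt_eps g' kappa (Cg kappa ltac:(lra)) (1 - gk) ltac:(lra))
    as [al [Hal Hc]].
  set (d := Rmin al dk / 2).
  assert (Hd : 0 < d /\ d < al /\ d < dk)
    by (unfold d; generalize (Rmin_l al dk) (Rmin_r al dk);
        unfold Rmin; destruct Rle_dec; lra).
  exists d; split; [lra|]; intros u v Hu Huv Hv.
  destruct (MVT_cor2 g g' u v Huv (fun x _ => Dg x ltac:(lra))) as [xi [Hr Hxi]].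
  assert (Hx : Rabs (xi - kappa) < al) by (apply Rabs_def1; lra).
  specialize (Hc xi Hx); apply Rabs_def2 in Hc; rewrite E in Hc.
  rewrite Hr; nra.
Qed.

Section Comparison.

Variables (g : R -> R) (kappa c h d : R) (p q : R -> R).
Hypothesis g_incr : forall x y, 0 <= x -> x < y -> g x < g y.
Hypothesis p_sol : profile_solution g c h p.
Hypothesis q_sol : profile_solution g c h q.
Hypothesis p_pos : forall s, 0 < p s.

(* At a negative global minimum m of q - p, the delayed gap of g is negative, so by
   monotonicity of g the order of q and p is reversed at the delayed point m - ch. *)
Lemma delayed_order (m : R) :
  (forall x, q m - p m <= q x - p x) -> q m - p m < 0 -> q (m - c * h) < p (m - c * h).
Proof.
  intros Hm Hneg; assert (Hgap := delayed_gap_at_min g c h m p q p_sol q_sol Hm).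
  destruct (Rlt_le_dec (q (m - c * h)) (p (m - c * h))) as [Hlt|Hle]; [exact Hlt|].
  destruct Hle as [Hlt|Heq]; [|rewrite Heq in Hgap; lra].
  specialize (g_incr _ _ (Rlt_le _ _ (p_pos _)) Hlt); lra.
Qed.

Lemma comparison_from_left (S : R) :
  (forall u v, kappa - d <= u -> u < v -> v <= kappa -> g v - g u < v - u) ->
  (forall s, p s <= kappa) ->
  vanishes_at_infinity (fun s => q s - p s) ->
  (forall s, s < S -> p s <= q s) -> (forall s, S <= s -> kappa - d <= q s) ->
  forall t, p t <= q t.
Proof.
  intros g_contr p_le Vw Hleft Htail t.
  destruct (Rle_lt_dec (p t) (q t)) as [Hle|Hlt]; [exact Hle|exfalso].
  assert (Cw : forall x, continuity_pt (fun s => q s - p s) x)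
    by (intros x; apply continuity_pt_minus; apply (profile_solution_continuous g c h);
        assumption).
  destruct (global_min_exists (fun s => q s - p s) t Cw Vw ltac:(lra)) as [m Hm].
  assert (Hneg : q m - p m < 0) by (specialize (Hm t); simpl in Hm; lra).
  assert (Hgap := delayed_gap_at_min g c h m p q p_sol q_sol Hm).
  assert (Hord := delayed_order m Hm Hneg).
  destruct (Rlt_le_dec (m - c * h) S) as [HS|HS]; [specialize (Hleft _ HS); lra|].
  specialize (g_contr _ _ (Htail _ HS) Hord (p_le _)).
  specialize (Hm (m - c * h)); simpl in Hm; lra.
Qed.

Lemma contact_propagates_back (x : R) :
  (forall t, p t <= q t) -> p x = q x -> p (x - c * h) = q (x - c * h).
Proof.
  intros Hle Hx.
  assert (Hm : forall y, q x - p x <= q y - p y) by (intros y; specialize (Hle y); lra).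
  assert (Hgap := delayed_gap_at_min g c h x p q p_sol q_sol Hm).
  destruct (Hle (x - c * h)) as [Hlt|Heq]; [|exact Heq].
  specialize (g_incr _ _ (Rlt_le _ _ (p_pos _)) Hlt); lra.
Qed.

(* Strong comparison: ordered solutions which are strictly ordered near -oo are
   strictly ordered everywhere, since a contact point would propagate to -oo. *)
Lemma strict_comparison (T : R) :
  0 < c * h -> (forall t, p t <= q t) -> (forall t, t < T -> p t < q t) ->
  forall t, p t < q t.
Proof.
  intros Hch Hle HT t.
  destruct (Hle t) as [Hlt|Heq]; [exact Hlt|exfalso].
  assert (Hcontact : forall n, p (t - INR n * (c * h)) = q (t - INR n * (c * h))).
  { induction n as [|n IH].
    - now rewrite Rmult_0_l, Rminus_0_r.
    - replace (t - INR (S n) * (c * h)) with (t - INR n * (c * h) - c * h)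
        by (rewrite S_INR; ring).
      apply contact_propagates_back; assumption. }
  destruct (INR_unbounded ((t - T) / (c * h))) as [n Hn].
  assert (Hfar : t - T < INR n * (c * h)).
  { replace (t - T) with ((t - T) / (c * h) * (c * h))
      by (unfold Rdiv; rewrite Rmult_assoc, Rinv_l, Rmult_1_r; lra).
    apply Rmult_lt_compat_r; assumption. }
  specialize (HT (t - INR n * (c * h)) ltac:(lra)); rewrite Hcontact in HT; lra.
Qed.

End Comparison.

(* An upward closed set of reals which is closed from the right and contains, with
   every positive element, a strictly smaller one, contains 0 as soon as it is
   nonempty: its infimum belongs to it and cannot be positive. *)
Lemma upward_set_contains_zero (P : R -> Prop) :
  (exists a0, P a0) ->
  (forall a b, a <= b -> P a -> P b) ->
  (forall a, (forall b, a < b -> P b) -> P a) ->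
  (forall a, 0 < a -> P a -> exists b, b < a /\ P b) ->
  P 0.
Proof.
  intros [a0 Pa0] Pup Pclosed Pdown.
  destruct (classic (P 0)) as [P0|NP0]; [exact P0|exfalso].
  set (E := fun x => 0 <= x /\ ~ P x).
  assert (bE : bound E).
  { exists a0; intros x [_ Hx]; destruct (Rle_lt_dec x a0) as [Y|Y]; [exact Y|].
    exfalso; apply Hx, (Pup a0); [lra | exact Pa0]. }
  destruct (completeness E bE (ex_intro _ 0 (conj (Rle_refl 0) NP0))) as [s [Hub Hlub]].
  assert (Hs0 : 0 <= s) by (apply Hub; split; [lra | exact NP0]).
  assert (Ps : P s).
  { apply Pclosed; intros b Hb; apply NNPP; intros NPb.
    assert (Eb : E b) by (split; [lra | exact NPb]).
    specialize (Hub b Eb); lra. }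
  assert (Hs : 0 < s) by (destruct Hs0 as [Hs|Hs]; [exact Hs | subst s; contradiction]).
  destruct (Pdown s Hs Ps) as [b [Hbs Pb]].
  assert (Hsb : s <= b).
  { apply Hlub; intros x [_ Hx]; destruct (Rle_lt_dec x b) as [Y|Y]; [exact Y|].
    exfalso; apply Hx, (Pup b); [lra | exact Pb]. }
  lra.
Qed.

(* A strict inequality p < q(. + a) on a compact interval survives small changes of
   the shift a (uniform continuity of q). *)
Lemma strict_order_stable_under_shift (p q : R -> R) (T S a : R) :
  (forall x, continuity_pt p x) -> (forall x, continuity_pt q x) -> T <= S ->
  (forall s, T <= s <= S -> p s < q (s + a)) ->
  exists eta, 0 < eta /\ forall b s, Rabs (b - a) < eta -> T <= s <= S -> p s < q (s + b).
Proof.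
  intros Cp Cq HTS Hlt.
  destruct (continuity_ab_min (fun s => q (s + a) - p s) T S HTS) as [mx [Hmin Hmx]].
  { intros x _; apply continuity_pt_minus; [apply continuity_pt_shift, Cq | apply Cp]. }
  set (gap := q (mx + a) - p mx).
  assert (Hgap : 0 < gap) by (specialize (Hlt mx Hmx); unfold gap; lra).
  destruct (Heine q (fun x => T + a - 1 <= x <= S + a + 1) (compact_P3 _ _)
    (fun x _ => Cq x) (mkposreal gap Hgap)) as [[eta0 Heta0] Hunif]; simpl in Hunif.
  exists (Rmin 1 eta0); split; [unfold Rmin; destruct Rle_dec; lra|].
  intros b s Hb Hs.
  assert (Hb' : Rabs (b - a) < 1 /\ Rabs (b - a) < eta0)
    by (generalize (Rmin_l 1 eta0) (Rmin_r 1 eta0); lra).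
  destruct Hb' as [Hb1 Hb2]; assert (Hb3 := Hb1); apply Rabs_def2 in Hb3.
  assert (Hq : Rabs (q (s + b) - q (s + a)) < gap).
  { apply Hunif; [lra | lra | replace (s + b - (s + a)) with (b - a) by ring; exact Hb2]. }
  specialize (Hmin s Hs); simpl in Hmin; fold gap in Hmin.
  apply Rabs_def2 in Hq; lra.
Qed.

Section Sliding.

Variables (g : R -> R) (kappa c h d T : R) (p q : R -> R).
Hypothesis delay_pos : 0 < c * h.
Hypothesis g_incr : forall x y, 0 <= x -> x < y -> g x < g y.
Hypothesis d_pos : 0 < d.
Hypothesis g_contr : forall u v, kappa - d <= u -> u < v -> v <= kappa -> g v - g u < v - u.
Hypothesis p_sol : profile_solution g c h p.
Hypothesis q_sol : profile_solution g c h q.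
Hypothesis p_pos : forall s, 0 < p s.
Hypothesis p_le_kappa : forall s, p s <= kappa.
Hypothesis q_mono : forall s t, s <= t -> q s <= q t.
Hypothesis p_left : lim_left p 0.
Hypothesis q_left : lim_left q 0.
Hypothesis p_right : lim_right p kappa.
Hypothesis q_right : lim_right q kappa.
Hypothesis below_T : forall t, t < T -> p t < q t.

Definition admissible_shift (a : R) : Prop := forall t, p t <= q (t + a).

Lemma admissible_shift_mono (a b : R) : a <= b -> admissible_shift a -> admissible_shift b.
Proof.
  intros Hab Ha t; specialize (Ha t); specialize (q_mono (t + a) (t + b) ltac:(lra)); lra.
Qed.

Lemma below_T_shift (a t : R) : 0 <= a -> t < T -> p t < q (t + a).
Proof. intros Ha Ht; specialize (below_T t Ht); specialize (q_mono t (t + a) ltac:(lra)); lra. Qed.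

Lemma admissible_shift_from_window (a S : R) :
  0 <= a -> (forall s, S <= s -> kappa - d <= q (s + a)) ->
  (forall s, T <= s < S -> p s <= q (s + a)) -> admissible_shift a.
Proof.
  intros Ha Htail Hwin; unfold admissible_shift.
  apply (comparison_from_left g kappa c h d p (fun t => q (t + a)) g_incr p_sol
    (profile_solution_shift g c h a q q_sol) p_pos S g_contr p_le_kappa).
  - apply (difference_vanishes_at_infinity _ _ 0 kappa); try assumption;
      [apply lim_left_shift | apply lim_right_shift]; assumption.
  - intros s Hs; destruct (Rlt_le_dec s T) as [HsT|HsT].
    + left; apply below_T_shift; assumption.
    + apply Hwin; lra.
  - exact Htail.
Qed.

Lemma tail_in_contraction_zone : exists S, T <= S /\ forall s, S <= s -> kappa - d <= q s.
Proof.
  destruct (q_right d d_pos) as [N HN]; exists (Rmax T N); split; [apply Rmax_l|].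
  intros s Hs; assert (Hq : Rabs (q s - kappa) < d)
    by (apply HN; generalize (Rmax_r T N); lra).
  apply Rabs_def2 in Hq; lra.
Qed.

(* A large shift moves the contraction zone of q(. + a) left of T, so it is admissible. *)
Lemma admissible_shift_exists : exists a, admissible_shift a.
Proof.
  destruct tail_in_contraction_zone as [S [HTS HS]]; exists (S - T).
  apply (admissible_shift_from_window (S - T) T); [lra | | intros s Hs; lra].
  intros s Hs; apply HS; lra.
Qed.

Lemma admissible_shift_right_closed (a : R) :
  (forall b, a < b -> admissible_shift b) -> admissible_shift a.
Proof.
  intros Hb t; destruct (Rle_lt_dec (p t) (q (t + a))) as [Hle|Hlt]; [exact Hle|exfalso].
  destruct (continuity_pt_eps q (t + a) (profile_solution_continuous g c h q q_sol _)
    (p t - q (t + a)) ltac:(lra)) as [e [He Hc]].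
  assert (Hclose : Rabs (t + (a + e / 2) - (t + a)) < e) by (apply Rabs_def1; lra).
  specialize (Hc _ Hclose); apply Rabs_def2 in Hc.
  specialize (Hb (a + e / 2) ltac:(lra) t); lra.
Qed.

(* A positive admissible shift can be decreased: the strong comparison makes the
   order strict, hence stable on the compact window [T, S]. *)
Lemma admissible_shift_decrease (a : R) :
  0 < a -> admissible_shift a -> exists b, b < a /\ admissible_shift b.
Proof.
  intros Ha Hadm.
  assert (Hstrict := strict_comparison g c h p (fun t => q (t + a)) g_incr p_sol
    (profile_solution_shift g c h a q q_sol) p_pos T delay_pos Hadm
    (fun t Ht => below_T_shift a t (Rlt_le _ _ Ha) Ht)).
  destruct tail_in_contraction_zone as [S [HTS HS]].
  destruct (strict_order_stable_under_shift p q T S a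
    (profile_solution_continuous g c h p p_sol) (profile_solution_continuous g c h q q_sol)
    HTS (fun s _ => Hstrict s)) as [eta [Heta Hstable]].
  set (b := Rmax 0 (a - eta / 2)).
  assert (Hb : 0 <= b /\ a - eta / 2 <= b /\ b < a)
    by (unfold b, Rmax; destruct Rle_dec; lra).
  exists b; split; [lra|].
  apply (admissible_shift_from_window b S); [lra | intros s Hs; apply HS; lra |].
  intros s Hs; left; apply Hstable; [apply Rabs_def1 | ]; lra.
Qed.

Theorem sliding_comparison : forall t, p t < q t.
Proof.
  assert (H0 : admissible_shift 0)
    by (apply upward_set_contains_zero; [exact admissible_shift_exists |
      exact admissible_shift_mono | exact admissible_shift_right_closed |
      exact admissible_shift_decrease]).
  intros t; apply (strict_comparison g c h p q g_incr p_sol q_sol p_pos T delay_pos);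
    [|exact below_T].
  intros s; rewrite <- (Rplus_0_r s) at 2; apply H0.
Qed.

End Sliding.

Theorem mainTheorem4 (g : R -> R) (kappa h c : R) (phi psi : R -> R) :
  0 < h -> hyp_H g kappa -> 0 < c ->
  wavefront g kappa h c phi -> wavefront g kappa h c psi ->
  (exists T : R, forall t, t < T -> phi t < psi t) ->
  forall t : R, phi t < psi t.
Proof.
  intros Hh [_ [_ [g_incr [Hk [_ [_ [Hgk Hg']]]]]]] Hc Wphi Wpsi [T HT].
  destruct (contraction_near_kappa g kappa Hgk Hg') as [d [Hd g_contr]].
  destruct (wavefront_nondecreasing g kappa h c phi Hk Wphi) as [_ phi_le].
  destruct (wavefront_nondecreasing g kappa h c psi Hk Wpsi) as [psi_mono _].
  destruct (wavefront_limits g kappa h c phi Wphi) as [phi_left phi_right].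
  destruct (wavefront_limits g kappa h c psi Wpsi) as [psi_left psi_right].
  apply (sliding_comparison g kappa c h d T phi psi); try assumption.
  - apply Rmult_lt_0_compat; assumption.
  - apply (wavefront_profile_solution g kappa h c); assumption.
  - apply (wavefront_profile_solution g kappa h c); assumption.
  - destruct Wphi as [_ [Hpos _]]; exact Hpos.
Qed.
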